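(* Let $A,B,C$ be finite nonempty subsets of $\mathbb R$, let $f:\mathbb R\to\mathbb R$ be strictly convex, and suppose $|A+B|\le M|B|$. Then for every $\tau>0$, $$|\{x\in f(A)+C: (f(A)*C)(x)\ge\tau\}|\le c\,(M\log(2M))^2\frac{|B||C|^2}{\tau^3},$$ where $c>0$ is an absolute constant.
   Context: $f(A)=\{f(a):a\in A\}$; $(f(A)*C)(x)=|\{(u,v)\in f(A)\times C: u+v=x\}|$. Logarithms are to base 2. *)

From Stdlib Require Import Reals.
From mathcomp Require Import all_boot all_order all_algebra.
From mathcomp Require Import finmap.
From mathcomp Require Import Rstruct.
Set Implicit Arguments. Unset Strict Implicit. Unset Printing Implicit Defensive.
Local Open Scope fset_scope.

Definition strictly_convex (f : R -> R) : Prop :=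
  forall (x y t : R), x <> y -> (0 < t)%R -> (t < 1)%R ->
    (f (t * x + (1 - t) * y) < t * f x + (1 - t) * f y)%R.

Definition sumset (A B : {fset R}) : {fset R} :=
  [fset (a + b)%R | a in A, b in B].

Definition fimage (f : R -> R) (A : {fset R}) : {fset R} :=
  [fset f a | a in A].

Definition rep (X C : {fset R}) (x : R) : nat :=
  #|` [fset p in X `*` C | (p.1 + p.2)%R == x] |.

Definition log2 (x : R) : R := (ln x / ln 2)%R.

(* For b in B and c in C the points (a + b, f a + c), a in A, lie on a translate of the
   graph of f, and by strict convexity two distinct translates meet at most once.  Let S be
   the set of x with at least T representations x = f a + c.  For each b and each x in S
   these give T points (a + b, x) of the grid (A + B) x S on the |B||C| curves, so there
   are at least |B||S|T incidences.  Cut the grid into cells of w consecutive columns and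
   h consecutive rows.  Each curve is monotone on either side of the minimum of f, so it
   visits at most 2(|A + B|/w + |S|/h + 1) cells; and two incidences of one curve in one
   cell are determined by their pair of grid points, so there are at most |A + B||S|wh
   such pairs.  Hence |B||S|T <= 2|B||C|(|A + B|/w + |S|/h + 1) + |A + B||S|wh, and
   choosing h ~ 16|C|/T and w ~ |B|T/(2|A + B|h) gives |S|T^3|B| <= 400|A + B|^2|C|^2.
   With |A + B| <= M|B| this is the claim, even without the logarithmic factor. *)

From Stdlib Require Import Reals.
From mathcomp Require Import all_boot all_order all_algebra.
From mathcomp Require Import finmap.
From mathcomp Require Import Rstruct.
From mathcomp Require Import ring lra zify.
Set Implicit Arguments. Unset Strict Implicit. Unset Printing Implicit Defensive.
Import Order.TTheory GRing.Theory Num.Theory.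
Local Open Scope ring_scope.

Section StrictlyConvex.
Variable f : R -> R.
Hypothesis f_convex : strictly_convex f.

Lemma convex_chord_lt (p q r : R) : p < q -> q < r ->
  f q * (r - p) < (r - q) * f p + (q - p) * f r.
Proof.
move=> pq qr; have rp : 0 < r - p by lra.
pose t := (r - q) / (r - p).
have t_gt0 : 0 < t by apply: divr_gt0; lra.
have t_lt1 : t < 1 by rewrite /t ltr_pdivrMr //; lra.
have tq : t * p + (1 - t) * r = q by rewrite /t; field; lra.
have pr : p <> r by move=> E; lra.
have := f_convex pr t_gt0 t_lt1.
rewrite tq -(ltr_pM2r rp).
have -> // : (t * f p + (1 - t) * f r) * (r - p) = (r - q) * f p + (q - p) * f r.
by rewrite /t; field; lra.
Qed.

Lemma increment_lt (u u' v v' : R) : u < v -> 0 < u' - u -> v' - v = u' - u ->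
  f u' - f u < f v' - f v.
Proof.
move=> uv uu' vv'.
have [l1 l2 l3] : [/\ u < u', u' < v' & v < v'] by split; lra.
have h1 := convex_chord_lt l1 l2.
have h2 := convex_chord_lt uv l3.
have v'u : 0 < v' - u by lra.
have : 0 < ((f v' - f v) - (f u' - f u)) * (v' - u) by nra.
by rewrite pmulr_lgt0 // subr_gt0.
Qed.

Lemma increment_inj (u u' v v' : R) : u' != u -> v' - v = u' - u ->
  f u' - f u = f v' - f v -> u = v.
Proof.
suff increment_neq x x' y y' : x < y -> x' != x -> y' - y = x' - x ->
    f x' - f x != f y' - f y.
  move=> uu' vv' E; case: (ltgtP u v) => // [uv|vu].
    by move: (increment_neq _ _ _ _ uv uu' vv'); rewrite E eqxx.
  have v'v : v' != v by apply: contraNneq uu' => v'E; lra.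
  by move: (increment_neq _ _ _ _ vu v'v (esym vv')); rewrite E eqxx.
move=> xy x'_neq yy'.
case: (ltgtP x' x) => [x'_lt|x'_gt|x'E]; last by rewrite x'E eqxx in x'_neq.
  have [x'y' xx'_pos yy'E] : [/\ x' < y', 0 < x - x' & y - y' = x - x'] by split; lra.
  by apply/eqP => E; have := increment_lt x'y' xx'_pos yy'E; lra.
have xx'_pos : 0 < x' - x by rewrite subr_gt0.
by apply/eqP => E; have := increment_lt xy xx'_pos yy'; lra.
Qed.

Lemma convex_le_left (m a a' : R) : f m <= f a -> a <= a' -> a' <= m -> f a' <= f a.
Proof.
move=> fma; rewrite le_eqVlt => /predU1P[<- //|lt_aa'].
rewrite le_eqVlt => /predU1P[-> //|lt_a'm].
have := convex_chord_lt lt_aa' lt_a'm; nra.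
Qed.

Lemma convex_le_right (m a a' : R) : f m <= f a' -> m <= a -> a <= a' -> f a <= f a'.
Proof.
move=> fma'; rewrite le_eqVlt => /predU1P[<- //|lt_ma].
rewrite le_eqVlt => /predU1P[-> //|lt_aa'].
have := convex_chord_lt lt_ma lt_aa'; nra.
Qed.

Lemma graph_translates_meet (b b' c c' a1 a2 a3 a4 : R) : a1 != a2 ->
  a1 + b = a3 + b' -> f a1 + c = f a3 + c' ->
  a2 + b = a4 + b' -> f a2 + c = f a4 + c' ->
  [/\ a1 = a3, b = b', c = c' & a2 = a4].
Proof.
move=> a12 e1 e2 e3 e4.
have a13 : a1 = a3.
  by apply: (@increment_inj a1 a2 a3 a4); [rewrite eq_sym | lra | lra].
by split => //; subst a3; lra.
Qed.

End StrictlyConvex.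

Lemma exists_minimizer (f : R -> R) (L : seq R) : exists m0, forall a, a \in L -> f m0 <= f a.
Proof.
elim: L => [|x L [m IHL]]; first by exists 0.
case: (lerP (f x) (f m)) => fxm.
  by exists x => a; rewrite in_cons => /orP[/eqP ->|/IHL]; last exact: le_trans.
by exists m => a; rewrite in_cons => /orP[/eqP ->|/IHL]; first exact: ltW.
Qed.

Lemma count_allpairs (S T U : Type) (g : S -> T -> U) (s : seq S) (t : seq T)
    (P : pred U) :
  count P [seq g x y | x <- s, y <- t] = \sum_(x <- s) count (fun y => P (g x y)) t.
Proof.
elim: s => [|x s IHs]; first by rewrite big_nil.
by rewrite allpairs_cons count_cat count_map IHs big_cons.
Qed.

Lemma count_allpairs_pair (S T : Type) (P1 : pred S) (P2 : pred T) (s : seq S) (t : seq T) :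
  count (fun p => P1 p.1 && P2 p.2) [seq (x, y) | x <- s, y <- t] =
  (count P1 s * count P2 t)%N.
Proof.
rewrite count_allpairs /=; elim: s => [|x s IHs]; first by rewrite big_nil.
rewrite big_cons IHs /= mulnDl; congr (_ + _)%N.
by case: (P1 x); rewrite ?mul1n ?mul0n //= count_pred0.
Qed.

Definition collisions (T U : eqType) (g : T -> U) (s : seq T) : nat :=
  count (fun p => (p.1 != p.2) && (g p.1 == g p.2)) [seq (x, y) | x <- s, y <- s].

Lemma collisions_cons (T U : eqType) (g : T -> U) (x : T) (s : seq T) : x \notin s ->
  (collisions g s + count (fun y => g x == g y) s <= collisions g (x :: s))%N.
Proof.
move=> xs; rewrite /collisions !count_allpairs big_cons /= eqxx add0n addnC.
apply: leq_add; last by apply: leq_sum => y _; apply: leq_addl.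
rewrite (@eq_in_count _ _ (fun y => g x == g y)) // => y ys.
by have -> : x != y by apply: contraNneq xs => ->.
Qed.

Lemma size_le_undup_collisions (T U : eqType) (g : T -> U) (s : seq T) : uniq s ->
  (size s <= size (undup (map g s)) + collisions g s)%N.
Proof.
elim: s => [|x s IHs] //= /andP[xs /IHs {}IHs].
have := collisions_cons g xs; case: ifP => [gxs|_] /=; last by lia.
have : (0 < count (fun y => g x == g y) s)%N.
  by rewrite -has_count; case/mapP: gxs => y ys ->; apply/hasP; exists y.
lia.
Qed.

Lemma sum_eq_mem (T : eqType) (y : T) (s : seq T) : uniq s ->
  (\sum_(x <- s) (y == x) = (y \in s))%N.
Proof.
elim: s => [|z s IHs]; first by rewrite big_nil.
rewrite big_cons in_cons /= => /andP[zs /IHs ->].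
by case: (eqVneq y z) => [->|] //=; rewrite (negbTE zs).
Qed.

Lemma count_mem_sum (T U : eqType) (g : T -> U) (L : seq T) (s : seq U) : uniq s ->
  count (fun p => g p \in s) L = (\sum_(x <- s) count (fun p => g p == x) L)%N.
Proof.
move=> s_uniq; elim: L => [|p L IHL] /=; first by rewrite big1_seq.
by rewrite IHL big_split /= sum_eq_mem.
Qed.

Definition rank_in (X : {fset R}) (x : R) : nat := count (fun y => y < x) (enum_fset X).

Lemma rank_in_le_card (X : {fset R}) (x : R) : (rank_in X x <= #|` X|)%N.
Proof. exact: count_size. Qed.

Lemma rank_in_mono (X : {fset R}) : {homo rank_in X : x y / x <= y >-> (x <= y)%N}.
Proof. by move=> x y xy; apply: sub_count => z /lt_le_trans; apply. Qed.

Lemma rank_in_lt (X : {fset R}) (x y : R) : x \in X -> x < y -> (rank_in X x < rank_in X y)%N.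
Proof.
move=> xX xy; rewrite /rank_in; set s := enum_fset X.
have disj : count (predI (fun z => z < x) (pred1 x)) s = 0%N.
  apply/eqP; rewrite -leqn0 leqNgt -has_count; apply/hasP => -[z _ /andP[zx /eqP zE]].
  by rewrite zE ltxx in zx.
have hit : (0 < count (pred1 x) s)%N by rewrite -has_count; apply/hasP; exists x => /=.
have sub : leq (count (predU (fun z => z < x) (pred1 x)) s) (count (fun z => z < y) s).
  by apply: sub_count => z /orP[zx|/eqP ->] //; apply: lt_trans zx xy.
apply: leq_trans sub; move: (count_predUI (fun z => z < x) (pred1 x) s).
by rewrite disj addn0 => ->; rewrite -addn1 leq_add2l.
Qed.

Lemma rank_in_inj (X : {fset R}) : {in X &, injective (rank_in X)}.
Proof.
move=> x y xX yX E; case: (ltgtP x y) => // [/(rank_in_lt xX)|/(rank_in_lt yX)];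
  by rewrite E ltnn.
Qed.

Lemma count_rank_in_divn (X : {fset R}) (w i : nat) : (0 < w)%N ->
  (count (fun y => rank_in X y %/ w == i) (enum_fset X) <= w)%N.
Proof.
move=> w_gt0; rewrite -size_filter -(size_map (rank_in X)).
apply: (@leq_trans (size (iota (i * w) w))); last by rewrite size_iota.
apply: uniq_leq_size.
  rewrite map_inj_in_uniq ?filter_uniq ?fset_uniq // => x y.
  by rewrite !mem_filter => /andP[_ xX] /andP[_ yX]; apply: rank_in_inj.
move=> r /mapP[y]; rewrite mem_filter => /andP[/eqP iy _] ->.
have := leq_divM (rank_in X y) w; have := ltn_ceil (rank_in X y) w_gt0.
by rewrite mem_iota iy; lia.
Qed.

Lemma mem_sumset (A B : {fset R}) (a b : R) : a \in A -> b \in B -> a + b \in sumset A B.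
Proof. by move=> aA bB; apply/imfset2P; exists a => //; exists b. Qed.

Lemma card_sumset_ge_l (A B : {fset R}) (b0 : R) : b0 \in B -> (#|` A| <= #|` sumset A B|)%N.
Proof.
move=> b0B; rewrite -(size_map (fun a => a + b0)); apply: uniq_leq_size.
  by rewrite map_inj_in_uniq ?fset_uniq // => x y _ _; apply: addIr.
by move=> z /mapP[a aA ->]; apply: mem_sumset.
Qed.

Lemma card_sumset_ge_r (A B : {fset R}) (a0 : R) : a0 \in A -> (#|` B| <= #|` sumset A B|)%N.
Proof.
move=> a0A; rewrite -(size_map (fun b => a0 + b)); apply: uniq_leq_size.
  by rewrite map_inj_in_uniq ?fset_uniq // => x y _ _; apply: addrI.
by move=> z /mapP[b bB ->]; apply: mem_sumset.
Qed.

Lemma rep_le_card_r (X C : {fset R}) (x : R) : (rep X C x <= #|` C|)%N.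
Proof.
rewrite /rep -(size_map snd); apply: uniq_leq_size.
  rewrite map_inj_in_uniq ?fset_uniq // => -[u v] [u' v'].
  rewrite !inE /= => /andP[_ /eqP uvx] /andP[_ /eqP u'v'x] vv'; subst v'.
  by have -> : u = u' by lra.
by move=> z /mapP[p]; rewrite !inE /= => /andP[/andP[_ pC] _] ->.
Qed.

Lemma rep_le_card_l (X C : {fset R}) (x : R) : (rep X C x <= #|` X|)%N.
Proof.
rewrite /rep -(size_map fst); apply: uniq_leq_size.
  rewrite map_inj_in_uniq ?fset_uniq // => -[u v] [u' v'].
  rewrite !inE /= => /andP[_ /eqP uvx] /andP[_ /eqP u'v'x] uu'; subst u'.
  by have -> : v = v' by lra.
by move=> z /mapP[p]; rewrite !inE /= => /andP[/andP[pX _] _] ->.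
Qed.

Lemma rep_fimage_le_count (A C : {fset R}) (f : R -> R) (x : R) :
  leq (rep (fimage f A) C x)
      (count (fun p => f p.1 + p.2 == x) [seq (a, c) | a <- enum_fset A, c <- enum_fset C]).
Proof.
rewrite /rep -size_filter -(size_map (fun p => (f p.1, p.2))).
apply: uniq_leq_size; first exact: fset_uniq.
move=> [u c]; rewrite !inE /= => /andP[/andP[/imfsetP[a aA ->] cC] /eqP fac].
apply/mapP; exists (a, c) => //.
by rewrite mem_filter /= fac eqxx; apply: allpairs_f.
Qed.

Definition rich_pairs (A C S : {fset R}) (f : R -> R) : seq (R * R) :=
  [seq p <- [seq (a, c) | a <- enum_fset A, c <- enum_fset C] | f p.1 + p.2 \in S].

Lemma size_rich_pairs_ge (A C S : {fset R}) (f : R -> R) (T : nat) :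
  (forall x, x \in S -> T <= rep (fimage f A) C x)%N ->
  (#|` S| * T <= size (rich_pairs A C S f))%N.
Proof.
move=> rich; rewrite /rich_pairs size_filter (count_mem_sum _ _ (fset_uniq S)).
rewrite mulnC -iter_addn_0 -(count_predT (enum_fset S)) -big_const_seq.
rewrite [X in (X <= _)%N]big_seq [X in (_ <= X)%N]big_seq; apply: leq_sum => x xS.
exact: leq_trans (rich x xS) (rep_fimage_le_count _ _ _ _).
Qed.

Lemma size_rich_pairs_le (A C S : {fset R}) (f : R -> R) :
  (size (rich_pairs A C S f) <= #|` A| * #|` C|)%N.
Proof. by rewrite size_filter -(size_allpairs pair); apply: count_size. Qed.

Section GridIncidences.
Variables (A B C S : {fset R}) (f : R -> R) (m0 : R) (w h : nat).
Hypothesis f_convex : strictly_convex f.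
Hypothesis m0_min : forall a, a \in A -> f m0 <= f a.
Hypotheses (w_gt0 : (0 < w)%N) (h_gt0 : (0 < h)%N).

(* An incidence (b, (a, c)) is the point (a + b, f a + c) of the grid (A + B) x S,
   which lies on the translate of the graph of f indexed by (b, c). *)
Definition incidences : seq (R * (R * R)) :=
  [seq (b, p) | b <- enum_fset B, p <- rich_pairs A C S f].

Definition point (e : R * (R * R)) : R * R := (e.2.1 + e.1, f e.2.1 + e.2.2).

Definition grid : seq (R * R) :=
  [seq (x, y) | x <- enum_fset (sumset A B), y <- enum_fset S].

Definition col (x : R) : nat := (rank_in (sumset A B) x %/ w)%N.
Definition row (y : R) : nat := (rank_in S y %/ h)%N.
Definition cell (p : R * R) : nat * nat := (col p.1, row p.2).
Definition ncols : nat := (#|` sumset A B| %/ w)%N.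
Definition nrows : nat := (#|` S| %/ h)%N.

(* Left of the minimiser m0 the curve a |-> (a + b, f a + c) moves right and down, right
   of it right and up; on each branch the code is monotone in a and changes whenever the
   cell does, and the two branches use disjoint ranges of codes. *)
Definition cell_code (e : R * (R * R)) : nat :=
  if e.2.1 <= m0 then (col (point e).1 + (nrows - row (point e).2))%N
  else ((ncols + nrows).+1 + col (point e).1 + row (point e).2)%N.

Definition curve_cell (e : R * (R * R)) : R * R * nat := (e.1, e.2.2, cell_code e).

Lemma mem_incidences (b a c : R) : (b, (a, c)) \in incidences ->
  [/\ b \in B, a \in A, c \in C & f a + c \in S].
Proof.
case/allpairsP => -[b' [a' c']] /= [b'B]; rewrite mem_filter /= => /andP[fS].
case/allpairsP => -[a'' c''] /= [a''A c''C [ea ec]] [eb ea' ec'].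
by subst; split.
Qed.

Lemma point_in_grid (e : R * (R * R)) : e \in incidences -> point e \in grid.
Proof.
by case: e => b [a c] /mem_incidences[bB aA _ fS]; apply: allpairs_f (mem_sumset aA bB) fS.
Qed.

Lemma col_le_ncols (x : R) : (col x <= ncols)%N.
Proof. exact/leq_div2r/rank_in_le_card. Qed.

Lemma row_le_nrows (y : R) : (row y <= nrows)%N.
Proof. exact/leq_div2r/rank_in_le_card. Qed.

Lemma col_mono : {homo col : x y / x <= y >-> (x <= y)%N}.
Proof. by move=> x y /(rank_in_mono (sumset A B)); apply: leq_div2r. Qed.

Lemma row_mono : {homo row : x y / x <= y >-> (x <= y)%N}.
Proof. by move=> x y /(rank_in_mono S); apply: leq_div2r. Qed.

Lemma cell_code_same_cell (b c a a' : R) : a \in A -> a' \in A -> a <= a' ->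
  cell_code (b, (a, c)) = cell_code (b, (a', c)) ->
  cell (point (b, (a, c))) = cell (point (b, (a', c))).
Proof.
move=> aA a'A aa'; rewrite /cell_code /cell.
set p := point (b, (a, c)); set p' := point (b, (a', c)).
have : (col p.1 <= col p'.1)%N by apply: col_mono; rewrite /p /p' /= lerD2r.
have := col_le_ncols p.1; have := col_le_ncols p'.1.
have := row_le_nrows p.2; have := row_le_nrows p'.2.
case: ifP => am; case: ifP => a'm.
- have faa' : f a' <= f a := convex_le_left f_convex (m0_min aA) aa' a'm.
  have : (row p'.2 <= row p.2)%N by apply: row_mono; rewrite /p /p' /= lerD2r.
  by move=> *; congr pair; lia.
- by move=> *; lia.
- by move: am; rewrite (le_trans aa' a'm).
- have m0a : m0 <= a by rewrite leNgt; apply/negP => /ltW; rewrite am.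
  have faa' : f a <= f a' := convex_le_right f_convex (m0_min a'A) m0a aa'.
  have : (row p.2 <= row p'.2)%N by apply: row_mono; rewrite /p /p' /= lerD2r.
  by move=> *; congr pair; lia.
Qed.

Lemma curve_cell_same_cell (e e' : R * (R * R)) : e \in incidences -> e' \in incidences ->
  curve_cell e = curve_cell e' -> cell (point e) = cell (point e').
Proof.
case: e => b [a c]; case: e' => b' [a' c'] /mem_incidences[_ aA _ _].
move=> /mem_incidences[_ a'A _ _] [<- <- code].
case: (lerP a a') => [aa'|/ltW a'a]; first exact: cell_code_same_cell.
exact/esym/cell_code_same_cell.
Qed.

Lemma uniq_incidences : uniq incidences.
Proof.
apply: allpairs_uniq => [||[? ?] [? ?] _ _ //]; first exact: fset_uniq.
apply/filter_uniq/allpairs_uniq => [||[? ?] [? ?] _ _ //]; exact: fset_uniq.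
Qed.

Lemma card_same_cell_pairs :
  (count (fun q => cell q.1 == cell q.2) [seq (p, q) | p <- grid, q <- grid]
     <= #|` sumset A B| * #|` S| * (w * h))%N.
Proof.
rewrite count_allpairs.
apply: (@leq_trans (\sum_(p <- grid) (w * h)%N)); last first.
  by rewrite big_const_seq count_predT iter_addn_0 size_allpairs mulnC.
apply: leq_sum => p _.
rewrite (@eq_count _ _ (fun q => (col q.1 == col p.1) && (row q.2 == row p.2))); last first.
  by move=> q; rewrite /cell xpair_eqE [col _ == _]eq_sym [row _ == _]eq_sym.
rewrite /grid (count_allpairs_pair (fun x => col x == col p.1) (fun y => row y == row p.2)).
by apply: leq_mul; apply: count_rank_in_divn.
Qed.

Lemma collisions_le_same_cell_pairs :
  (collisions curve_cell incidences
     <= count (fun q => cell q.1 == cell q.2) [seq (p, q) | p <- grid, q <- grid])%N.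
Proof.
rewrite /collisions -!size_filter; set Q := filter _ _.
have uniqQ : uniq Q.
  apply/filter_uniq/allpairs_uniq => [||[? ?] [? ?] _ _ //]; exact: uniq_incidences.
rewrite -(size_map (fun q => (point q.1, point q.2))); apply: uniq_leq_size.
  rewrite map_inj_in_uniq // => -[[b1 [a1 c1]] [b2 [a2 c2]]] [[b3 [a3 c3]] [b4 [a4 c4]]].
  rewrite !mem_filter /= => /andP[/andP[e12 /eqP[eb ec _]] _] /andP[/andP[_ /eqP[eb' ec' _]] _].
  subst b2 c2 b4 c4; rewrite /point /= => -[e1 e2 e3 e4].
  have a12 : a1 != a2 by apply: contraNneq e12 => ->.
  by have [-> -> -> ->] := graph_translates_meet f_convex a12 e1 e2 e3 e4.
move=> q /mapP[[e e']]; rewrite mem_filter => /andP[/andP[_ /eqP same] ee'] ->.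
case/allpairsP: ee' => -[e1 e1'] /= [eI e'I [E E']]; subst e1 e1'.
rewrite mem_filter /= (curve_cell_same_cell eI e'I same) eqxx.
by apply: allpairs_f; apply: point_in_grid.
Qed.

Lemma cell_code_lt (e : R * (R * R)) : (cell_code e < 2 * (ncols + nrows + 1))%N.
Proof.
rewrite /cell_code; have := col_le_ncols (point e).1; have := row_le_nrows (point e).2.
by case: ifP => _; lia.
Qed.

Lemma card_curve_cells :
  (size (undup (map curve_cell incidences)) <= #|` B| * #|` C| * (2 * (ncols + nrows + 1)))%N.
Proof.
pose codes := iota 0 (2 * (ncols + nrows + 1)).
pose curves := [seq (b, c) | b <- enum_fset B, c <- enum_fset C].
rewrite -(size_iota 0 (2 * (ncols + nrows + 1))) -(size_allpairs pair (enum_fset B)).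
rewrite -(size_allpairs (fun bc (k : nat) => (bc.1, bc.2, k)) curves codes).
apply: uniq_leq_size; first exact: undup_uniq.
move=> z; rewrite mem_undup => /mapP[[b [a c]] eI ->].
have [bB _ cC _] := mem_incidences eI.
apply: (allpairs_f (fun bc (k : nat) => (bc.1, bc.2, k)) (x := (b, c))).
  exact: allpairs_f.
by rewrite mem_iota cell_code_lt.
Qed.

Lemma incidence_bound :
  (#|` B| * size (rich_pairs A C S f)
     <= #|` B| * #|` C| * (2 * (ncols + nrows + 1)) + #|` sumset A B| * #|` S| * (w * h))%N.
Proof.
have := size_le_undup_collisions curve_cell uniq_incidences.
rewrite size_allpairs => /leq_trans; apply; apply: leq_add.
  exact: card_curve_cells.
exact: leq_trans collisions_le_same_cell_pairs card_same_cell_pairs.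
Qed.

End GridIncidences.

Lemma rich_bound_width0 (b m N s T h : nat) :
  (h * T <= 17 * m)%N -> (b * T < 2 * N * h)%N -> (s * T <= N * m)%N ->
  (s * T ^ 3 * b <= 400 * N ^ 2 * m ^ 2)%N.
Proof.
move=> hT bT sT.
have bTT : (b * T * T <= 34 * N * m)%N.
  have := leq_mul (ltnW bT) (leqnn T); have := leq_mul (leqnn (2 * N)) hT; lia.
have := leq_mul sT bTT; lia.
Qed.

Lemma rich_bound_rows (b m N s T w h : nat) :
  (0 < b)%N -> (16 * m < h * T)%N -> (w * (2 * N * h) <= b * T)%N ->
  (b * (s * T) <= b * m * (2 * (N %/ w + s %/ h + 1)) + N * s * (w * h))%N ->
  (3 * (s * T) <= 16 * m * (N %/ w + 1))%N.
Proof.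
move=> b_gt0 mhT wbT core.
have sh : (s %/ h * h <= s)%N := leq_divM s h.
have cellsT : (2 * (N * s * (w * h)) <= b * (s * T))%N.
  have := leq_mul (leqnn s) wbT; lia.
have rowsT : (16 * m * (s %/ h) <= s * T)%N.
  have := leq_mul (ltnW mhT) (leqnn (s %/ h)); have := leq_mul sh (leqnn T); lia.
have : (b * (3 * (s * T)) <= b * (16 * m * (N %/ w + 1)))%N.
  have := leq_mul (leqnn b) rowsT; lia.
by rewrite leq_pmul2l.
Qed.

Lemma rich_bound_cols (b N T w h : nat) :
  (0 < w)%N -> (b * T < w.+1 * (2 * N * h))%N -> (N %/ w * (b * T) <= 4 * N * N * h)%N.
Proof.
move=> w_gt0 bTw.
have Nw : (N %/ w * w <= N)%N := leq_divM N w.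
have := leq_mul (leqnn (N %/ w)) (ltnW bTw); have := leq_mul Nw (leqnn (4 * N * h)).
have := leq_mul (leqnn (N %/ w * (2 * N * h))) w_gt0; lia.
Qed.

Lemma rich_bound_nat (b m N s T : nat) :
  (0 < b)%N -> (0 < T)%N -> (T <= m)%N -> (T <= N)%N -> (b <= N)%N -> (s * T <= N * m)%N ->
  (forall w h, (0 < w)%N -> (0 < h)%N ->
     b * (s * T) <= b * m * (2 * (N %/ w + s %/ h + 1)) + N * s * (w * h))%N ->
  (s * T ^ 3 * b <= 400 * N ^ 2 * m ^ 2)%N.
Proof.
move=> b_gt0 T_gt0 Tm TN bN sT core.
(* With h T > 16 m the row term of [core] is at most s T / 8, and with w = bT / 2Nh the
   cell term is at most half its left-hand side; if that w is 0, trivial bounds suffice. *)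
pose h := (16 * m %/ T).+1.
have mhT : (16 * m < h * T)%N := ltn_ceil _ T_gt0.
have hT : (h * T <= 17 * m)%N by have := leq_divM (16 * m) T; rewrite /h mulSn; lia.
have Nh_gt0 : (0 < 2 * N * h)%N by rewrite !muln_gt0; lia.
pose w := (b * T %/ (2 * N * h))%N.
have wbT : (w * (2 * N * h) <= b * T)%N := leq_divM _ _.
have bTw : (b * T < w.+1 * (2 * N * h))%N := ltn_ceil _ Nh_gt0.
have [w0|w_gt0] := posnP w.
  by apply: rich_bound_width0 hT _ sT; rewrite w0 mul1n in bTw.
have rows := rich_bound_rows b_gt0 mhT wbT (core w h w_gt0 isT).
have cols := rich_bound_cols w_gt0 bTw.
have := leq_mul rows (leqnn (b * T * T)).
have := leq_mul (leqnn (16 * m * T)) cols.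
have := leq_mul (leqnn (64 * m * N * N)) hT.
have := leq_mul (leq_mul (leq_mul bN TN) Tm) (leqnn (16 * m)).
lia.
Qed.

Lemma card_rich_bound (A B C S : {fset R}) (f : R -> R) (T : nat) :
  A != fset0 -> B != fset0 -> strictly_convex f -> (0 < T)%N ->
  (forall x, x \in S -> T <= rep (fimage f A) C x)%N ->
  (#|` S| * T ^ 3 * #|` B| <= 400 * #|` sumset A B| ^ 2 * #|` C| ^ 2)%N.
Proof.
move=> /fset0Pn[a0 a0A] /fset0Pn[b0 b0B] f_convex T_gt0 rich.
have [-> | /fset0Pn[x xS]] := eqVneq S fset0; first by rewrite cardfs0.
have [m0 m0_min] := exists_minimizer f (enum_fset A).
have TC : (T <= #|` C|)%N := leq_trans (rich x xS) (rep_le_card_r _ _ _).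
have TA : (T <= #|` A|)%N.
  exact: leq_trans (rich x xS) (leq_trans (rep_le_card_l _ _ _) (leq_imfset_card _ _ _)).
have AN := card_sumset_ge_l A b0B; have BN := card_sumset_ge_r B a0A.
have sJ := size_rich_pairs_ge rich; have JAC := size_rich_pairs_le A C S f.
apply: rich_bound_nat => //.
- by rewrite cardfs_gt0; apply/fset0Pn; exists b0.
- exact: leq_trans TA AN.
- exact: leq_trans sJ (leq_trans JAC (leq_mul AN (leqnn _))).
move=> w h w_gt0 h_gt0; apply: leq_trans (incidence_bound B C S f_convex m0_min w_gt0 h_gt0).
by rewrite leq_mul2l sJ orbT.
Qed.

Lemma exists_nat_ceil (F : archiRealDomainType) (t : F) : 0 < t ->
  exists T : nat, [/\ (0 < T)%N, t <= T%:R & forall n : nat, (t <= n%:R) = (T <= n)%N].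
Proof.
move=> t_gt0; have ceil_gt0 : 0 < Num.ceil t by rewrite ceil_gt0.
exists `|Num.ceil t|%N; have TE : `|Num.ceil t|%N%:Z = Num.ceil t by rewrite gez0_abs // ltW.
split; first by rewrite -ltz_nat TE.
  by rewrite pmulrn TE ceil_ge.
by move=> n; rewrite -lez_nat TE ceil_le_int pmulrn.
Qed.

Lemma log2_ge1 (M : R) : 1 <= M -> 1 <= log2 (2 * M).
Proof.
move=> M_ge1.
have ln2_gt0 : 0 < ln 2.
  have lt01 : Rlt 0%R 1%R by apply/RltP; exact: ltr01.
  have lt12 : Rlt 1%R 2%R by apply/RltP; lra.
  by have := ln_increasing _ _ lt01 lt12; rewrite ln_1 => /RltP.
have : ln 2 <= ln (2 * M).
  case: (ltgtP M 1) => [|M_gt1|->]; [lra | | by rewrite Rmult_1_r lexx].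
  have lt02 : Rlt 0%R 2%R by apply/RltP; lra.
  have lt2M : Rlt 2%R (2 * M)%R by apply/RltP; lra.
  exact/ltW/RltP/(ln_increasing _ _ lt02 lt2M).
by rewrite /log2 ler_pdivlMr // mul1r.
Qed.

Lemma rich_bound_real (F : realFieldType) (s t T b N m M L : F) :
  0 <= s -> 0 < t -> t <= T -> 1 <= b -> 0 <= m -> 0 <= N -> N <= M * b -> 1 <= L ->
  s * T ^+ 3 * b <= 400 * N ^+ 2 * m ^+ 2 ->
  s <= 400 * (M * L) ^+ 2 * (b * m ^+ 2 / t ^+ 3).
Proof.
move=> s_ge0 t_gt0 tT b_ge1 m_ge0 N_ge0 NMb L_ge1 bound.
have M_ge0 : 0 <= M by nra.
have t3_gt0 : 0 < t ^+ 3 by rewrite exprn_gt0.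
have tT3 : t ^+ 3 <= T ^+ 3 by rewrite lerXn2r // ?nnegrE; lra.
have NMLb : N ^+ 2 <= (M * L * b) ^+ 2 by rewrite lerXn2r // ?nnegrE; nra.
rewrite -(@ler_pM2r _ (t ^+ 3 * b)); last by apply: mulr_gt0; lra.
have -> : 400 * (M * L) ^+ 2 * (b * m ^+ 2 / t ^+ 3) * (t ^+ 3 * b)
          = 400 * (M * L * b) ^+ 2 * m ^+ 2 by field; lra.
apply: le_trans (_ : _ <= s * T ^+ 3 * b) (le_trans bound _).
  by rewrite mulrA ler_wpM2r ?ler_wpM2l //; lra.
by rewrite ler_wpM2r ?exprn_ge0 // ler_wpM2l.
Qed.

Local Open Scope fset_scope.

Theorem lemma27 :
  exists c : R, 0 < c /\
  forall (A B C : {fset R}) (f : R -> R) (M tau : R),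
    A != fset0 -> B != fset0 -> C != fset0 ->
    strictly_convex f ->
    (#|` sumset A B|)%:R <= M * (#|` B|)%:R ->
    0 < tau ->
    (#|` [fset x in sumset (fimage f A) C | tau <= (rep (fimage f A) C x)%:R] |)%:R
      <= c * (M * log2 (2 * M)) ^+ 2 * ((#|` B|)%:R * (#|` C|)%:R ^+ 2 / tau ^+ 3).
Proof.
exists 400; split => // A B C f M tau A0 B0 _ f_convex AB_le tau_gt0.
have [T [T_gt0 tau_le_T tau_le_nat]] := exists_nat_ceil tau_gt0.
set S := [fset x in _ | _].
have rich x : x \in S -> (T <= rep (fimage f A) C x)%N.
  by rewrite !inE -tau_le_nat => /andP[].
have := card_rich_bound A0 B0 f_convex T_gt0 rich.
rewrite -(ler_nat R) !natrM => bound.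
have [a0 a0A] := fset0Pn _ A0.
have b_ge1 : 1 <= (#|` B|)%:R :> R by rewrite ler1n cardfs_gt0.
have BN : (#|` B|)%:R <= (#|` sumset A B|)%:R :> R by rewrite ler_nat (card_sumset_ge_r B a0A).
have M_ge1 : 1 <= M.
  have := le_trans BN AB_le; rewrite -{1}(mul1r (#|` B|)%:R) ler_pM2r //; lra.
by apply: rich_bound_real bound => //; apply: log2_ge1.
Qed.
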